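(* Let $\mathcal C$ be a $(2,1)$-category and let $\mathcal A,\mathcal B$ be arrowy $2$-subcategories of $\mathcal C$ such that for every morphism $f\colon X\to Y$ of $\mathcal C$ there exist a morphism $i\colon X\to Z$ of $\mathcal A$, a morphism $p\colon Z\to Y$ of $\mathcal B$ and a $2$-cell $pi\Rightarrow f$ (i.e. $\mathrm{Comp}_{\mathcal A,\mathcal B}(f)\neq\emptyset$). Then for every $n\ge 0$ and every $n$-simplex $\sigma$ of $\mathcal C$, the set $\mathrm{Comp}_{\mathcal A,\mathcal B}(\sigma)$ is nonempty.
   Context: A $(2,1)$-category is a $2$-category all of whose $2$-cells are invertible; an arrowy $2$-subcategory has all objects and is full on $2$-cells between its morphisms (inclusion on hom-categories fully faithful and injective on objects). $[n]=\{0,\dots,n\}$ with its usual order, viewed as a category. An $n$-simplex of $\mathcal C$ is a strictly unital pseudofunctor $\sigma\colon[n]\to\mathcal C$. Let $\Delta_n=\{(k,l)\in[n]\times[n]\mid k\ge l\}$ with the product partial order, viewed as a category, and let $[n]\to\Delta_n$ be the diagonal embedding $l\mapsto(l,l)$. The set $\mathrm{Comp}_{\mathcal A,\mathcal B}(\sigma)$ of compactifications of $\sigma$ is the set of strictly unital pseudofunctors $F\colon\Delta_n\to\mathcal C$ whose composite with the diagonal embedding equals $\sigma$, such that $F((k,l)\to(k',l))$ is a morphism of $\mathcal A$ and $F((k',l)\to(k',l'))$ is a morphism of $\mathcal B$ for all relevant $k\le k'$, $l\le l'$. For $n=1$ and $\sigma=f$ this amounts to a factorization $X\xrightarrow{i}Z\xrightarrow{p}Y$,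 $i\in\mathcal A$, $p\in\mathcal B$, with an invertible $2$-cell $pi\Rightarrow f$. *)

From mathcomp Require Import all_boot.

Set Implicit Arguments.
Unset Strict Implicit.
Unset Printing Implicit Defensive.

Definition tr2 (O : Type) (H : O -> O -> Type)
  (C : forall x y, H x y -> H x y -> Type) (x y : O) (f f' g g' : H x y)
  (e1 : f = f') (e2 : g = g') (a : C x y f g) : C x y f' g' :=
  match e2 in _ = g0 return C x y f' g0 with
  | erefl => match e1 in _ = f0 return C x y f0 g with erefl => a end
  end.

(* A strict 2-category, presented via hom-categories, whiskerings and the
   interchange law.  comp1 g f is "g after f". *)
Record TwoCat := {
  Ob : Type;
  Hom : Ob -> Ob -> Type;
  Cell : forall x y, Hom x y -> Hom x y -> Type;
  id1 : forall x, Hom x x;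
  comp1 : forall x y z, Hom y z -> Hom x y -> Hom x z;
  comp1_id_l : forall x y (f : Hom x y), comp1 (id1 y) f = f;
  comp1_id_r : forall x y (f : Hom x y), comp1 f (id1 x) = f;
  comp1_assoc : forall w x y z (h : Hom y z) (g : Hom x y) (f : Hom w x),
      comp1 h (comp1 g f) = comp1 (comp1 h g) f;
  id2 : forall x y (f : Hom x y), Cell f f;
  vcomp : forall x y (f g h : Hom x y), Cell g h -> Cell f g -> Cell f h;
  vcomp_assoc : forall x y (f g h k : Hom x y) (c : Cell h k) (b : Cell g h)
      (a : Cell f g), vcomp c (vcomp b a) = vcomp (vcomp c b) a;
  vcomp_id_l : forall x y (f g : Hom x y) (a : Cell f g), vcomp (id2 g) a = a;
  vcomp_id_r : forall x y (f g : Hom x y) (a : Cell f g), vcomp a (id2 f) = a;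
  whiskerL : forall x y z (h : Hom y z) (f g : Hom x y),
      Cell f g -> Cell (comp1 h f) (comp1 h g);
  whiskerR : forall x y z (f g : Hom y z) (h : Hom x y),
      Cell f g -> Cell (comp1 f h) (comp1 g h);
  whiskerL_id2 : forall x y z (h : Hom y z) (f : Hom x y),
      whiskerL h (id2 f) = id2 (comp1 h f);
  whiskerR_id2 : forall x y z (f : Hom y z) (h : Hom x y),
      whiskerR h (id2 f) = id2 (comp1 f h);
  whiskerL_vcomp : forall x y z (h : Hom y z) (f g k : Hom x y)
      (b : Cell g k) (a : Cell f g),
      whiskerL h (vcomp b a) = vcomp (whiskerL h b) (whiskerL h a);
  whiskerR_vcomp : forall x y z (f g k : Hom y z) (h : Hom x y)
      (b : Cell g k) (a : Cell f g),
      whiskerR h (vcomp b a) = vcomp (whiskerR h b) (whiskerR h a);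
  whiskerL_id1 : forall x y (f g : Hom x y) (a : Cell f g),
      whiskerL (id1 y) a = tr2 (esym (comp1_id_l f)) (esym (comp1_id_l g)) a;
  whiskerR_id1 : forall x y (f g : Hom x y) (a : Cell f g),
      whiskerR (id1 x) a = tr2 (esym (comp1_id_r f)) (esym (comp1_id_r g)) a;
  whiskerL_comp : forall w x y z (k : Hom y z) (h : Hom x y) (f g : Hom w x)
      (a : Cell f g),
      whiskerL k (whiskerL h a)
      = tr2 (esym (comp1_assoc k h f)) (esym (comp1_assoc k h g))
            (whiskerL (comp1 k h) a);
  whiskerR_comp : forall w x y z (f g : Hom y z) (h : Hom x y) (k : Hom w x)
      (a : Cell f g),
      whiskerR k (whiskerR h a)
      = tr2 (comp1_assoc f h k) (comp1_assoc g h k)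
            (whiskerR (comp1 h k) a);
  whiskerLR : forall w x y z (k : Hom y z) (f g : Hom x y) (h : Hom w x)
      (a : Cell f g),
      whiskerR h (whiskerL k a)
      = tr2 (comp1_assoc k f h) (comp1_assoc k g h)
            (whiskerL k (whiskerR h a));
  interchange : forall x y z (f f' : Hom x y) (g g' : Hom y z)
      (a : Cell f f') (b : Cell g g'),
      vcomp (whiskerR f' b) (whiskerL g a) = vcomp (whiskerL g' a) (whiskerR f b)
}.

Arguments Hom : clear implicits.
Arguments Ob : clear implicits.
Arguments Cell : clear implicits.
Arguments Cell t {x y}.
Arguments id1 {_} x.
Arguments comp1 {_ x y z}.
Arguments id2 {_ x y}.
Arguments vcomp {_ x y f g h}.
Arguments whiskerL {_ x y z} h {f g}.
Arguments whiskerR {_ x y z f g} h.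

Definition is21 (C : TwoCat) : Prop :=
  forall x y (f g : Hom C x y) (a : Cell C f g),
    exists b : Cell C g f, vcomp b a = id2 f /\ vcomp a b = id2 g.

(* An arrowy 2-subcategory: all objects, a class of 1-morphisms containing
   identities and closed under composition, and all 2-cells between them. *)
Record SubCat (C : TwoCat) := {
  inSub : forall x y, Hom C x y -> Prop;
  inSub_id : forall x, inSub (id1 x);
  inSub_comp : forall x y z (g : Hom C y z) (f : Hom C x y),
      inSub g -> inSub f -> inSub (comp1 g f)
}.

(* Strictly unital pseudofunctor from a poset (with boolean order le),
   viewed as a category, to C.  F2 a b c : F(b<=c) F(a<=b) => F(a<=c). *)
Record PsFun (P : Type) (le : P -> P -> bool) (C : TwoCat) := {
  F0 : P -> Ob C;
  F1 : forall a b, le a b -> Hom C (F0 a) (F0 b);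
  F2 : forall a b c (hab : le a b) (hbc : le b c) (hac : le a c),
      Cell C (comp1 (F1 hbc) (F1 hab)) (F1 hac);
  F1_id : forall a (h : le a a), F1 h = id1 (F0 a);
  F2_unit_r : forall a b (haa : le a a) (hab : le a b),
      F2 haa hab hab
      = tr2
          (esym (etrans (f_equal (comp1 (F1 hab)) (F1_id haa)) (comp1_id_r (F1 hab))))
          erefl (id2 (F1 hab));
  F2_unit_l : forall a b (hab : le a b) (hbb : le b b),
      F2 hab hbb hab
      = tr2
          (esym (etrans (f_equal (fun u => comp1 u (F1 hab)) (F1_id hbb))
                        (comp1_id_l (F1 hab))))
          erefl (id2 (F1 hab));
  F2_assoc : forall a b c d (hab : le a b) (hbc : le b c) (hcd : le c d)
      (hac : le a c) (hbd : le b d) (had : le a d),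
      vcomp (F2 hac hcd had) (whiskerL (F1 hcd) (F2 hab hbc hac))
      = tr2 (esym (comp1_assoc (F1 hcd) (F1 hbc) (F1 hab))) erefl
          (vcomp (F2 hab hbd had) (whiskerR (F1 hab) (F2 hbc hcd hbd)))
}.

Arguments F0 {_ _ _}.
Arguments F1 {_ _ _} p {a b}.
Arguments F2 {_ _ _} p {a b c}.

Definition restrict (Q P : Type) (leQ : Q -> Q -> bool) (leP : P -> P -> bool)
  (C : TwoCat) (d : Q -> P) (mono : forall a b, leQ a b -> leP (d a) (d b))
  (F : PsFun leP C) : PsFun leQ C :=
  {| F0 := fun a => F0 F (d a);
     F1 := fun a b h => F1 F (mono a b h);
     F2 := fun a b c hab hbc hac => F2 F (mono _ _ hab) (mono _ _ hbc) (mono _ _ hac);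
     F1_id := fun a h => F1_id F (mono a a h);
     F2_unit_r := fun a b haa hab => F2_unit_r F (mono a a haa) (mono a b hab);
     F2_unit_l := fun a b hab hbb => F2_unit_l F (mono a b hab) (mono b b hbb);
     F2_assoc := fun a b c d hab hbc hcd hac hbd had =>
       F2_assoc F (mono _ _ hab) (mono _ _ hbc) (mono _ _ hcd)
                (mono _ _ hac) (mono _ _ hbd) (mono _ _ had) |}.

Definition leOrd (n : nat) (a b : 'I_n.+1) : bool := (a <= b)%N.

Definition simplex (C : TwoCat) (n : nat) := PsFun (@leOrd n) C.

Definition Delta (n : nat) := {p : 'I_n.+1 * 'I_n.+1 | (p.2 <= p.1)%N}.
Definition leDelta (n : nat) (p q : Delta n) : bool :=
  ((sval p).1 <= (sval q).1)%N && ((sval p).2 <= (sval q).2)%N.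

Definition diag (n : nat) (l : 'I_n.+1) : Delta n :=
  exist (fun p : 'I_n.+1 * 'I_n.+1 => (p.2 <= p.1)%N) (l, l) (leqnn l).

Lemma diag_mono (n : nat) (a b : 'I_n.+1) :
  leOrd a b -> leDelta (diag a) (diag b).
Proof. by rewrite /leOrd /leDelta /= => ->. Qed.

Definition IsComp (C : TwoCat) (A B : SubCat C) (n : nat) (s : simplex C n)
  (F : PsFun (@leDelta n) C) : Prop :=
  restrict (@diag_mono n) F = s /\
  (forall (p q : Delta n) (h : leDelta p q),
      (sval p).2 = (sval q).2 -> inSub A (F1 F h)) /\
  (forall (p q : Delta n) (h : leDelta p q),
      (sval p).1 = (sval q).1 -> inSub B (F1 F h)).

Definition CompNonempty (C : TwoCat) (A B : SubCat C) (n : nat)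
  (s : simplex C n) : Prop :=
  exists F : PsFun (@leDelta n) C, IsComp A B s F.

From Pilot Require Import Defs.
From mathcomp Require Import all_boot zify.
From Stdlib Require Import ProofIrrelevance FunctionalExtensionality.

(* We build the compactification
   F : Delta_n -> C one point at a time.

   The basic construction is a one-point extension of pseudofunctors: given a
   pseudofunctor F on a preorder T, two elements m <= M with nothing lying
   "above M and below m", and a factorization p i => F(m <= M) through a new
   object Z, F extends to option T, where the new point None sits just above
   m and just below M and is sent to Z.

   The points (k,l) of Delta_n off the diagonal are then added row by row
   (k = 1, ..., n) and, inside row k, for l = k-1 down to 0, always between
   m = (k-1,l) and M = (k,l+1).  An invariant records that the current stage
   is an order-embedded copy of the points added so far, that it restricts to
   sigma on the diagonal, and that its horizontal (resp. vertical) morphisms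
   lie in A (resp. B); at the end the stage is all of Delta_n. *)

Set Implicit Arguments.
Unset Strict Implicit.
Unset Printing Implicit Defensive.

Section CellEquality.
Variable C : TwoCat.

Definition cast x y (f g : Hom C x y) (e : f = g) : Cell C f g :=
  match e in _ = g0 return Cell C f g0 with erefl => id2 f end.

Definition ceq x y (f g f' g' : Hom C x y) (a : Cell C f g) (b : Cell C f' g') : Prop :=
  exists (e1 : f = f') (e2 : g = g'), tr2 (C:=@Cell C) e1 e2 a = b.

Lemma ceq_refl x y (f g : Hom C x y) (a : Cell C f g) : ceq a a.
Proof. by exists erefl, erefl. Qed.

Lemma ceq_sym x y (f g f' g' : Hom C x y) (a : Cell C f g) (b : Cell C f' g') :
  ceq a b -> ceq b a.
Proof. by case=> e1 [e2 <-]; destruct e1, e2; exists erefl, erefl. Qed.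

Lemma ceq_trans x y (f g f' g' f'' g'' : Hom C x y) (a : Cell C f g)
  (b : Cell C f' g') (c : Cell C f'' g'') : ceq a b -> ceq b c -> ceq a c.
Proof.
by case=> e1 [e2 <-] [e3 [e4 <-]]; destruct e1, e2, e3, e4; exists erefl, erefl.
Qed.

Lemma ceq_eq x y (f g : Hom C x y) (a b : Cell C f g) : ceq a b -> a = b.
Proof.
case=> e1 [e2 <-].
by rewrite (proof_irrelevance _ e1 erefl) (proof_irrelevance _ e2 erefl).
Qed.

Lemma ceq_tr2 x y (f g f' g' : Hom C x y) (e1 : f = f') (e2 : g = g') (a : Cell C f g) :
  ceq (tr2 (C:=@Cell C) e1 e2 a) a.
Proof. by apply: ceq_sym; exists e1, e2. Qed.

Lemma ceq_cast x y (f g : Hom C x y) (e : f = g) : ceq (cast e) (id2 f).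
Proof. by destruct e; apply: ceq_refl. Qed.

Lemma ceq_id2 x y (f f' : Hom C x y) : f = f' -> ceq (id2 f) (id2 f').
Proof. by move=> e; destruct e; apply: ceq_refl. Qed.

Lemma ceq_whiskerL x y z (h h' : Hom C y z) (f g f' g' : Hom C x y)
  (a : Cell C f g) (a' : Cell C f' g') :
  h = h' -> ceq a a' -> ceq (whiskerL h a) (whiskerL h' a').
Proof. by move=> e [e1 [e2 <-]]; destruct e, e1, e2; apply: ceq_refl. Qed.

Lemma ceq_whiskerR x y z (h h' : Hom C x y) (f g f' g' : Hom C y z)
  (a : Cell C f g) (a' : Cell C f' g') :
  h = h' -> ceq a a' -> ceq (whiskerR h a) (whiskerR h' a').
Proof. by move=> e [e1 [e2 <-]]; destruct e, e1, e2; apply: ceq_refl. Qed.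

Lemma ceq_wL_comp w x y z (k : Hom C y z) (h : Hom C x y) (f g : Hom C w x)
  (a : Cell C f g) : ceq (whiskerL k (whiskerL h a)) (whiskerL (comp1 k h) a).
Proof. rewrite whiskerL_comp; apply: ceq_tr2. Qed.

Lemma ceq_wR_comp w x y z (f g : Hom C y z) (h : Hom C x y) (k : Hom C w x)
  (a : Cell C f g) : ceq (whiskerR k (whiskerR h a)) (whiskerR (comp1 h k) a).
Proof. rewrite whiskerR_comp; apply: ceq_tr2. Qed.

Lemma ceq_wLR w x y z (k : Hom C y z) (f g : Hom C x y) (h : Hom C w x)
  (a : Cell C f g) : ceq (whiskerR h (whiskerL k a)) (whiskerL k (whiskerR h a)).
Proof. rewrite whiskerLR; apply: ceq_tr2. Qed.

Lemma ceq_wL_id x y (f g : Hom C x y) (a : Cell C f g) : ceq (whiskerL (id1 y) a) a.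
Proof. rewrite whiskerL_id1; apply: ceq_tr2. Qed.

Lemma ceq_wR_id x y (f g : Hom C x y) (a : Cell C f g) : ceq (whiskerR (id1 x) a) a.
Proof. rewrite whiskerR_id1; apply: ceq_tr2. Qed.

Lemma ceq_vcomp_id x y (f g h f1 f2 : Hom C x y) (b : Cell C g h) (a : Cell C f g) :
  ceq b (id2 f1) -> ceq a (id2 f2) -> ceq (vcomp b a) (id2 f2).
Proof.
case=> e1 [e2 Hb] [e3 [e4 Ha]]; destruct e1, e3, e4, e2; rewrite /= in Ha Hb.
by rewrite Ha Hb vcomp_id_l; apply: ceq_refl.
Qed.

Lemma ceq_wL_id2 x y z (h : Hom C y z) (f g f1 : Hom C x y) (a : Cell C f g) :
  ceq a (id2 f1) -> ceq (whiskerL h a) (id2 (comp1 h f1)).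
Proof.
case=> e1 [e2 Ha]; destruct e1, e2; rewrite /= in Ha.
by rewrite Ha whiskerL_id2; apply: ceq_refl.
Qed.

Lemma ceq_wR_id2 x y z (h : Hom C x y) (f g f1 : Hom C y z) (a : Cell C f g) :
  ceq a (id2 f1) -> ceq (whiskerR h a) (id2 (comp1 f1 h)).
Proof.
case=> e1 [e2 Ha]; destruct e1, e2; rewrite /= in Ha.
by rewrite Ha whiskerR_id2; apply: ceq_refl.
Qed.

Lemma ceq_tr2_id2 x y (f g f' g' f1 : Hom C x y) (e1 : f = f') (e2 : g = g')
  (a : Cell C f g) : ceq a (id2 f1) -> ceq (tr2 (C:=@Cell C) e1 e2 a) (id2 f1).
Proof. by move=> H; apply: ceq_trans H; apply: ceq_tr2. Qed.

Lemma ceq_vcomp_idl x y (f g h f1 : Hom C x y) (b : Cell C g h) (a : Cell C f g) :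
  ceq b (id2 f1) -> ceq (vcomp b a) a.
Proof.
case=> e1 [e2 Hb]; destruct e1, e2; rewrite /= in Hb.
by rewrite Hb vcomp_id_l; apply: ceq_refl.
Qed.

Lemma ceq_vcomp_idr x y (f g h f1 : Hom C x y) (b : Cell C g h) (a : Cell C f g) :
  ceq a (id2 f1) -> ceq (vcomp b a) b.
Proof.
case=> e1 [e2 Ha]; destruct e1, e2; rewrite /= in Ha.
by rewrite Ha vcomp_id_r; apply: ceq_refl.
Qed.

End CellEquality.

Section Composites.
Variable C : TwoCat.

(* Vertical composite of b and a when the target of a only equals the source
   of b up to an equality E of 1-cells.  Chains of such composites can be
   rewritten factor by factor without first aligning their boundaries. *)
Definition hv x y (f g g' h : Hom C x y) (b : Cell C g' h) (a : Cell C f g)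
  (E : g = g') : Cell C f h := vcomp b (vcomp (cast E) a).

Lemma vcomp_hv x y (f g h : Hom C x y) (b : Cell C g h) (a : Cell C f g) :
  vcomp b a = hv b a erefl.
Proof. by rewrite /hv /= vcomp_id_l. Qed.

Lemma ceq_hv x y (f g g' h f2 g2 g2' h2 : Hom C x y) (b : Cell C g' h)
  (a : Cell C f g) (E : g = g') (b2 : Cell C g2' h2) (a2 : Cell C f2 g2) :
  ceq b b2 -> ceq a a2 -> forall E2 : g2 = g2', ceq (hv b a E) (hv b2 a2 E2).
Proof.
case=> e1 [e2 <-] [e3 [e4 <-]] E2; destruct e1, e2, e3, e4.
by rewrite (proof_irrelevance _ E2 E); apply: ceq_refl.
Qed.

Lemma hv_assoc x y (f g g' h h' k : Hom C x y) (c : Cell C h' k) (b : Cell C g' h)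
  (a : Cell C f g) (E1 : g = g') (E2 : h = h') (E3 : h = h') (E4 : g = g') :
  ceq (hv c (hv b a E1) E2) (hv (hv c b E3) a E4).
Proof.
destruct E1, E2; rewrite (proof_irrelevance _ E3 erefl) (proof_irrelevance _ E4 erefl).
by rewrite /hv /= !vcomp_id_l vcomp_assoc; apply: ceq_refl.
Qed.

Lemma ceq_hv_castr x y (f f' g' h : Hom C x y) (b : Cell C g' h) (e : f = f')
  (E : f' = g') : ceq (hv b (cast e) E) b.
Proof. by destruct e, E; rewrite /hv /= !vcomp_id_r; apply: ceq_refl. Qed.

Lemma ceq_hv_idr x y (f g g' h f1 : Hom C x y) (b : Cell C g' h) (a : Cell C f g)
  (E : g = g') : ceq a (id2 f1) -> ceq (hv b a E) b.
Proof.
case=> e1 [e2 Ha]; destruct e1, e2, E; rewrite /= in Ha.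
by rewrite /hv /= Ha !vcomp_id_l vcomp_id_r; apply: ceq_refl.
Qed.

Lemma ceq_wL_hv x y z (k : Hom C y z) (f g g' h : Hom C x y) (b : Cell C g' h)
  (a : Cell C f g) (E : g = g') (E2 : comp1 k g = comp1 k g') :
  ceq (whiskerL k (hv b a E)) (hv (whiskerL k b) (whiskerL k a) E2).
Proof.
destruct E; rewrite (proof_irrelevance _ E2 erefl) /hv /= !vcomp_id_l whiskerL_vcomp.
exact: ceq_refl.
Qed.

Lemma ceq_wR_hv x y z (k : Hom C x y) (f g g' h : Hom C y z) (b : Cell C g' h)
  (a : Cell C f g) (E : g = g') (E2 : comp1 g k = comp1 g' k) :
  ceq (whiskerR k (hv b a E)) (hv (whiskerR k b) (whiskerR k a) E2).
Proof.
destruct E; rewrite (proof_irrelevance _ E2 erefl) /hv /= !vcomp_id_l whiskerR_vcomp.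
exact: ceq_refl.
Qed.

Lemma ceq_interchange x y z (f f' : Hom C x y) (g g' : Hom C y z)
  (a : Cell C f f') (b : Cell C g g') E E' :
  ceq (hv (whiskerR f' b) (whiskerL g a) E) (hv (whiskerL g' a) (whiskerR f b) E').
Proof.
rewrite (proof_irrelevance _ E erefl) (proof_irrelevance _ E' erefl) -!vcomp_hv.
by rewrite (Defs.interchange (t:=C)); apply: ceq_refl.
Qed.

End Composites.

Lemma ceq_F2assoc C P (le : P -> P -> bool) (F : PsFun le C) a b c d (hab : le a b)
  (hbc : le b c) (hcd : le c d) (hac : le a c) (hbd : le b d) (had : le a d) E E' :
  ceq (hv (F2 F hac hcd had) (whiskerL (F1 F hcd) (F2 F hab hbc hac)) E)
      (hv (F2 F hab hbd had) (whiskerR (F1 F hab) (F2 F hbc hcd hbd)) E').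
Proof.
rewrite (proof_irrelevance _ E erefl) (proof_irrelevance _ E' erefl) -!vcomp_hv.
by rewrite F2_assoc; apply: ceq_tr2.
Qed.

Lemma ceq_F2pi C P (le : P -> P -> bool) (F : PsFun le C) a b c (hab hab' : le a b)
  (hbc hbc' : le b c) (hac hac' : le a c) :
  ceq (F2 F hab hbc hac) (F2 F hab' hbc' hac').
Proof.
rewrite (eq_irrelevance hab hab') (eq_irrelevance hbc hbc') (eq_irrelevance hac hac').
exact: ceq_refl.
Qed.

(* Tactics for [ceq] goals.
   - [heq] closes equalities of 1-cells by the unit and associativity laws and
     proof irrelevance of order proofs.
   - [cid] proves that an identity-like cell is [ceq] to an identity.
   - [cs] strips transports and identity-like factors from the left-hand side.
   - [rw_all t], [rw_out t], [rw_in t] rewrite (by the [ceq] lemma applied in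
     [t]) the whole left-hand side, or the outer resp. inner factor of a
     composite [hv b a]; [cong_out t], [cong_in t] close a goal between two
     composites differing in one factor.
   - [crefl] closes goals between syntactically equal cells, up to order
     proofs and the boundary equalities. *)
Ltac heq := rewrite ?F1_id ?comp1_assoc ?comp1_id_l ?comp1_id_r;
  (reflexivity || (repeat f_equal; apply: eq_irrelevance)).

Ltac cid :=
  lazymatch goal with
  | |- ceq (cast _) _ => apply: ceq_cast
  | |- ceq (id2 _) _ => apply: ceq_refl
  | |- ceq (tr2 _ _ _) _ => apply: ceq_tr2_id2; cid
  | |- ceq (vcomp _ _) _ => apply: ceq_vcomp_id; [cid | cid]
  | |- ceq (whiskerL _ _) _ => apply: ceq_wL_id2; cid
  | |- ceq (whiskerR _ _) _ => apply: ceq_wR_id2; cid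
  end.

Ltac cs1 :=
  first
  [ apply: ceq_trans; [apply: ceq_tr2 |]
  | apply: ceq_trans; [apply: ceq_vcomp_idl; cid |]
  | apply: ceq_trans; [apply: ceq_vcomp_idr; cid |]
  | apply: ceq_trans; [apply: ceq_wL_id |]
  | apply: ceq_trans; [apply: ceq_wR_id |] ].
Ltac cs := repeat cs1.
Ltac csym := apply: ceq_sym.

Tactic Notation "rw_all" tactic3(t) := apply: ceq_trans; [t; try heq | ].
Tactic Notation "rw_out" tactic3(t) :=
  apply: ceq_trans; [apply: ceq_hv; [t; try heq | apply: ceq_refl | heq] | ].
Tactic Notation "rw_in" tactic3(t) :=
  apply: ceq_trans; [apply: ceq_hv; [apply: ceq_refl | t; try heq | heq] | ].
Tactic Notation "cong_out" tactic3(t) := apply: ceq_hv; [t; try heq | apply: ceq_refl | heq].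
Tactic Notation "cong_in" tactic3(t) := apply: ceq_hv; [apply: ceq_refl | t; try heq | heq].

Ltac crefl := first [ apply: ceq_refl | apply: ceq_F2pi
  | apply: ceq_hv; [crefl | crefl | heq]
  | apply: ceq_whiskerL; [heq | crefl]
  | apply: ceq_whiskerR; [heq | crefl] ].

Section OnePointExtension.
Variable C : TwoCat.
Variable T : Type.
Variable le : T -> T -> bool.
Hypothesis le_trans : forall a b c, le a b -> le b c -> le a c.
Variable F : PsFun le C.
Variables m M : T.
Hypothesis le_mM : le m M.
(* No element lies above M and below m: the new point fits in between. *)
Hypothesis no_back : forall b, le M b -> le b m -> False.
Variable Z : Ob C.
Variable i : Hom C (F0 F m) Z.
Variable p : Hom C Z (F0 F M).
Variable phi : Cell C (comp1 p i) (F1 F le_mM).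

Definition le_ext (a b : option T) : bool :=
  match a, b with
  | Some x, Some y => le x y
  | Some x, None => le x m
  | None, Some y => le M y
  | None, None => true
  end.

Lemma le_ext_trans a b c : le_ext a b -> le_ext b c -> le_ext a c.
Proof. by case: a b c => [x|] [y|] [z|] //=; eauto. Qed.

Definition ob_ext (a : option T) : Ob C := match a with Some x => F0 F x | None => Z end.

Definition map_ext (a b : option T) : le_ext a b -> Hom C (ob_ext a) (ob_ext b) :=
  match a as a0, b as b0 return le_ext a0 b0 -> Hom C (ob_ext a0) (ob_ext b0) with
  | Some x, Some y => fun h => F1 F h
  | Some x, None => fun h => comp1 i (F1 F h)
  | None, Some y => fun h => comp1 (F1 F h) p
  | None, None => fun _ => id1 Z
  end.

Definition phi_at z (hMz : le M z) :
  Cell C (comp1 (comp1 (F1 F hMz) p) i) (F1 F (le_trans le_mM hMz)) :=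
  vcomp (F2 F le_mM hMz (le_trans le_mM hMz))
    (vcomp (whiskerL (F1 F hMz) phi) (cast (esym (comp1_assoc (F1 F hMz) p i)))).

Lemma F1_pi a b (h h' : le a b) : F1 F h = F1 F h'.
Proof. by rewrite (eq_irrelevance h h'). Qed.

(* The composition cells of the extension; a triple passing through the new
   point twice with an old point in between is impossible by [no_back]. *)
Definition cell_ext (a b c : option T) :
  forall (hab : le_ext a b) (hbc : le_ext b c) (hac : le_ext a c),
    Cell C (comp1 (map_ext hbc) (map_ext hab)) (map_ext hac) :=
  match a as a0, b as b0, c as c0 return
    forall (hab : le_ext a0 b0) (hbc : le_ext b0 c0) (hac : le_ext a0 c0),
    Cell C (comp1 (map_ext hbc) (map_ext hab)) (map_ext hac) with
  | Some x, Some y, Some z => fun hab hbc hac => F2 F hab hbc hac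
  | Some x, Some y, None => fun hab hbc hac =>
      vcomp (whiskerL i (F2 F hab hbc hac))
            (cast (esym (comp1_assoc i (F1 F hbc) (F1 F hab))))
  | Some x, None, Some z => fun hab hbc hac =>
      vcomp (F2 F hab (le_trans le_mM hbc) hac)
        (vcomp (whiskerR (F1 F hab) (phi_at hbc))
           (cast (comp1_assoc (comp1 (F1 F hbc) p) i (F1 F hab))))
  | Some x, None, None => fun hab hbc hac =>
      cast (etrans (comp1_id_l _) (f_equal (comp1 i) (F1_pi hab hac)))
  | None, Some y, Some z => fun hab hbc hac =>
      vcomp (whiskerR p (F2 F hab hbc hac))
            (cast (comp1_assoc (F1 F hbc) (F1 F hab) p))
  | None, Some y, None => fun hab hbc hac => False_rect _ (no_back hab hbc)
  | None, None, Some z => fun hab hbc hac =>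
      cast (etrans (comp1_id_r _) (f_equal (fun u => comp1 u p) (F1_pi hbc hac)))
  | None, None, None => fun hab hbc hac => cast (comp1_id_l _)
  end.

Lemma map_ext_id a (h : le_ext a a) : map_ext h = id1 (ob_ext a).
Proof. by case: a h => [x|] h //=; apply: F1_id. Qed.

Lemma cell_ext_unit_r a b (haa : le_ext a a) (hab : le_ext a b) :
  cell_ext haa hab hab
  = tr2 (C:=@Cell C)
      (esym (etrans (f_equal (comp1 (map_ext hab)) (map_ext_id haa))
                    (comp1_id_r (map_ext hab))))
      erefl (id2 (map_ext hab)).
Proof.
apply: ceq_eq; apply: ceq_trans; last by apply: ceq_sym; apply: ceq_tr2.
case: a b haa hab => [x|] [y|] haa hab /=; rewrite ?F2_unit_r ?F2_unit_l;
  (apply: ceq_trans; [cid | apply: ceq_id2; heq]).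
Qed.

Lemma cell_ext_unit_l a b (hab : le_ext a b) (hbb : le_ext b b) :
  cell_ext hab hbb hab
  = tr2 (C:=@Cell C)
      (esym (etrans (f_equal (fun u => comp1 u (map_ext hab)) (map_ext_id hbb))
                    (comp1_id_l (map_ext hab))))
      erefl (id2 (map_ext hab)).
Proof.
apply: ceq_eq; apply: ceq_trans; last by apply: ceq_sym; apply: ceq_tr2.
case: a b hab hbb => [x|] [y|] hab hbb /=; rewrite ?F2_unit_r ?F2_unit_l;
  (apply: ceq_trans; [cid | apply: ceq_id2; heq]).
Qed.

(* Naturality of [phi_at] in z. *)
Lemma phi_at_natural z w (hbc : le M z) (hcd : le z w) (hbd : le M w) E E' :
  ceq (hv (phi_at hbd) (whiskerR i (whiskerR p (F2 F hbc hcd hbd))) E)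
      (hv (F2 F (le_trans le_mM hbc) hcd (le_trans le_mM hbd))
          (whiskerL (F1 F hcd) (phi_at hbc)) E').
Proof.
rewrite /phi_at; rewrite ?vcomp_hv.
rw_in (apply: ceq_wR_comp).
rw_all (csym; apply: hv_assoc).
rw_in (cong_out (apply: ceq_hv_castr)).
rw_in (csym; apply: ceq_interchange).
rw_all (apply: hv_assoc).
rw_out (csym; apply: (@ceq_F2assoc _ _ _ _ _ _ _ _ _ _ _ (le_trans le_mM hbc))).
rw_all (csym; apply: hv_assoc).
csym.
rw_in (apply: ceq_wL_hv).
rw_in (cong_in (apply: ceq_wL_hv)).
rw_in (cong_in (apply: ceq_hv_idr; cid)).
rw_in (cong_in (apply: ceq_wL_comp)).
crefl.
Qed.

Definition assoc_law a b c d (hab : le_ext a b) (hbc : le_ext b c) (hcd : le_ext c d)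
  (hac : le_ext a c) (hbd : le_ext b d) (had : le_ext a d) : Prop :=
  ceq (vcomp (cell_ext hac hcd had) (whiskerL (map_ext hcd) (cell_ext hab hbc hac)))
      (vcomp (cell_ext hab hbd had) (whiskerR (map_ext hab) (cell_ext hbc hcd hbd))).

(* The four quadruples meeting the new point exactly once: there associativity
   reduces to that of F, together with interchange and the naturality of
   [phi_at]. *)
Lemma assoc_new_last x y z (hab : le x y) (hbc : le y z) (hcd : le z m)
  (hac : le x z) (hbd : le y m) (had : le x m) :
  @assoc_law (Some x) (Some y) (Some z) None hab hbc hcd hac hbd had.
Proof.
rewrite /assoc_law /=; cs; csym; cs; rewrite ?vcomp_hv.
rw_out (apply: ceq_hv_castr).
rw_in (apply: ceq_wR_hv).
rw_in (apply: ceq_hv_idr; cid).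
rw_in (apply: ceq_wLR).
rw_all (csym; apply: ceq_wL_hv).
csym.
rw_out (apply: ceq_hv_castr).
rw_in (csym; apply: ceq_wL_comp).
rw_all (csym; apply: ceq_wL_hv).
apply: ceq_whiskerL => //.
exact: ceq_F2assoc.
Qed.

Lemma assoc_new_third x y w (hab : le x y) (hbc : le y m) (hcd : le M w)
  (hac : le x m) (hbd : le y w) (had : le x w) :
  @assoc_law (Some x) (Some y) None (Some w) hab hbc hcd hac hbd had.
Proof.
rewrite /assoc_law /=; cs; csym; cs; rewrite ?vcomp_hv.
rw_in (apply: ceq_wR_hv).
rw_in (cong_in (apply: ceq_wR_hv)).
rw_in (cong_in (apply: ceq_hv_idr; cid)).
rw_in (cong_in (apply: ceq_wR_comp)).
csym.
rw_all (csym; apply: hv_assoc).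
rw_in (cong_out (apply: ceq_hv_castr)).
rw_in (cong_in (apply: ceq_wL_hv)).
rw_in (cong_in (apply: ceq_hv_idr; cid)).
rw_in (cong_in (apply: ceq_wL_comp)).
rw_in (apply: ceq_interchange).
rw_all (apply: hv_assoc).
rw_out (apply: ceq_F2assoc).
rw_all (csym; apply: hv_assoc).
crefl.
Qed.

Lemma assoc_new_second x z w (hab : le x m) (hbc : le M z) (hcd : le z w)
  (hac : le x z) (hbd : le M w) (had : le x w) :
  @assoc_law (Some x) None (Some z) (Some w) hab hbc hcd hac hbd had.
Proof.
rewrite /assoc_law /=; cs; csym; cs; rewrite ?vcomp_hv.
rw_all (csym; apply: hv_assoc).
rw_in (cong_out (apply: ceq_hv_castr)).
rw_in (cong_in (apply: ceq_wR_hv)).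
rw_in (cong_in (apply: ceq_hv_idr; cid)).
rw_in (cong_in (csym; apply: ceq_wR_comp)).
rw_in (csym; apply: ceq_wR_hv).
rw_in (apply: ceq_whiskerR; [by [] | apply: phi_at_natural]).
rw_in (apply: ceq_wR_hv).
rw_all (apply: hv_assoc).
rw_out (csym; apply: (@ceq_F2assoc _ _ _ _ _ _ _ _ _ _ _ hac)).
rw_all (csym; apply: hv_assoc).
csym.
rw_in (apply: ceq_wL_hv).
rw_in (cong_in (apply: ceq_wL_hv)).
rw_in (cong_in (apply: ceq_hv_idr; cid)).
rw_in (cong_in (csym; apply: ceq_wLR)).
crefl.
Qed.

Lemma assoc_new_first y z w (hab : le M y) (hbc : le y z) (hcd : le z w)
  (hac : le M z) (hbd : le y w) (had : le M w) :
  @assoc_law None (Some y) (Some z) (Some w) hab hbc hcd hac hbd had.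
Proof.
rewrite /assoc_law /=; cs; csym; cs; rewrite ?vcomp_hv.
rw_out (apply: ceq_hv_castr).
rw_in (csym; apply: ceq_wR_comp).
rw_all (csym; apply: ceq_wR_hv).
csym.
rw_out (apply: ceq_hv_castr).
rw_in (apply: ceq_wL_hv).
rw_in (apply: ceq_hv_idr; cid).
rw_in (csym; apply: ceq_wLR).
rw_all (csym; apply: ceq_wR_hv).
apply: ceq_whiskerR => //; exact: ceq_F2assoc.
Qed.

(* Identifies duplicate order proofs, so that syntactic comparison applies. *)
Ltac dedup := repeat match goal with
  | H1 : is_true ?P, H2 : is_true ?P |- _ =>
      let E := fresh in have E := eq_irrelevance H1 H2; subst H2
  end.

(* Besides the quadruples of old points
   (associativity of F) and the four cases above, the quadruple meets the new
   point at least twice; then it does so consecutively (by [no_back]) and both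
   sides reduce to the same cell once the identity-like factors are removed. *)
Lemma cell_ext_assoc a b c d (hab : le_ext a b) (hbc : le_ext b c) (hcd : le_ext c d)
  (hac : le_ext a c) (hbd : le_ext b d) (had : le_ext a d) :
  vcomp (cell_ext hac hcd had) (whiskerL (map_ext hcd) (cell_ext hab hbc hac))
  = tr2 (C:=@Cell C) (esym (comp1_assoc (map_ext hcd) (map_ext hbc) (map_ext hab)))
      erefl (vcomp (cell_ext hab hbd had) (whiskerR (map_ext hab) (cell_ext hbc hcd hbd))).
Proof.
apply: ceq_eq; apply: ceq_trans; last by csym; apply: ceq_tr2.
case: a b c d hab hbc hcd hac hbd had => [x|] [y|] [z|] [w|] hab hbc hcd hac hbd had;
  first [ exact: assoc_new_last | exact: assoc_new_third
        | exact: assoc_new_second | exact: assoc_new_first | idtac ];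
  rewrite /= in hab hbc hcd hac hbd had |- *;
  try (match goal with H1 : is_true (le M ?y), H2 : is_true (le ?y m) |- _ =>
         case: (no_back H1 H2) end); dedup.
- by rewrite F2_assoc; apply: ceq_tr2.
all: cs; csym; cs; first [ apply: ceq_refl
  | apply: ceq_trans; [cid | csym; apply: ceq_trans; [cid | apply: ceq_id2; heq]] ].
Qed.

Definition extend : PsFun le_ext C :=
  {| F0 := ob_ext; F1 := map_ext; F2 := cell_ext; F1_id := map_ext_id;
     F2_unit_r := cell_ext_unit_r; F2_unit_l := cell_ext_unit_l;
     F2_assoc := cell_ext_assoc |}.

End OnePointExtension.

Lemma psfun_eq_intro P (le : P -> P -> bool) C O f1 f2 p1 p2 p3 p4 q1 q2 q3 q4 :
  @Build_PsFun P le C O f1 f2 p1 p2 p3 p4 = @Build_PsFun P le C O f1 f2 q1 q2 q3 q4.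
Proof.
have e1 := proof_irrelevance _ p1 q1; subst q1.
have e2 := proof_irrelevance _ p2 q2; subst q2.
have e3 := proof_irrelevance _ p3 q3; subst q3.
by have e4 := proof_irrelevance _ p4 q4; subst q4.
Qed.

Lemma restrict_ext Q P (leQ : Q -> Q -> bool) (leP : P -> P -> bool) C
  (d1 d2 : Q -> P) m1 m2 (F : PsFun leP C) :
  (forall a, d1 a = d2 a) ->
  @restrict Q P leQ leP C d1 m1 F = @restrict Q P leQ leP C d2 m2 F.
Proof.
move=> H; have E : d1 = d2 by apply: functional_extensionality.
by subst d2; rewrite (proof_irrelevance _ m1 m2).
Qed.

Lemma if_some T (c : bool) (v a : T) :
  (if c then None else Some v) = Some a -> c = false /\ v = a.
Proof. by case: c => //= [[]]. Qed.

Lemma if_none T (c : bool) (v : T) : (if c then None else Some v) = None -> c = true.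
Proof. by case: c. Qed.

Section Compactification.
Variable C : TwoCat.
Variables A B : SubCat C.
Variable n : nat.
Variable s : simplex C n.

(* A stage of the construction: a pseudofunctor on some preorder, with the
   positions (x,y) of Delta_n it realizes ([st_at]) and the diagonal. *)
Record Stage := mkStage {
  st_T : Type;
  st_le : st_T -> st_T -> bool;
  st_at : nat -> nat -> st_T;
  st_diag : 'I_n.+1 -> st_T;
  st_F : PsFun st_le C }.
Arguments st_le : clear implicits.
Arguments st_at : clear implicits.
Arguments st_diag : clear implicits.
Arguments st_F : clear implicits.

(* The positions added once row k has been filled from column k-1 down to
   column j (all diagonal points are present from the start). *)
Definition added (k j x y : nat) : bool :=
  [&& y <= x, x <= n & [|| x == y, x < k | (x == k) && (j <= y)]].

Record Inv (st : Stage) (P : nat -> nat -> bool) : Prop := {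
  inv_le : forall x y x' y', P x y -> P x' y' ->
    st_le st (st_at st x y) (st_at st x' y') = (x <= x') && (y <= y');
  inv_onto : forall u, exists x y, P x y /\ st_at st x y = u;
  inv_trans : forall a b c, st_le st a b -> st_le st b c -> st_le st a c;
  inv_A : forall u v (h : st_le st u v) x y x' y',
    st_at st x y = u -> st_at st x' y' = v -> P x y -> P x' y' -> y = y' ->
    inSub A (F1 (st_F st) h);
  inv_B : forall u v (h : st_le st u v) x y x' y',
    st_at st x y = u -> st_at st x' y' = v -> P x y -> P x' y' -> x = x' ->
    inSub B (F1 (st_F st) h);
  inv_diag : forall a : 'I_n.+1, st_at st a a = st_diag st a;
  inv_sigma : exists mono : (forall a b : 'I_n.+1,
      leOrd a b -> st_le st (st_diag st a) (st_diag st b)),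
    @restrict _ _ (@leOrd n) (st_le st) C (st_diag st) mono (st_F st) = s }.

Lemma Inv_ext st P Q : (forall x y, P x y = Q x y) -> Inv st P -> Inv st Q.
Proof.
move=> H; have -> // : P = Q.
by apply: functional_extensionality => x; apply: functional_extensionality.
Qed.

Definition stage0 : Stage := @mkStage 'I_n.+1 (@leOrd n) (fun x _ => inord x) id s.

Lemma added0 x y : added 0 0 x y -> x = y /\ x <= n.
Proof. by rewrite /added => /and3P [H1 H2 /orP [/eqP -> //|/orP [//|/andP [/eqP E _]]]]; lia. Qed.

Lemma stage0_inv : Inv stage0 (added 0 0).
Proof.
split.
- move=> x y x' y' /added0 [<- Hx] /added0 [<- Hx'] /=.
  by rewrite /leOrd !inordK ?andbb // ltnS.
- move=> u; exists u, u; split; last by rewrite /= inord_val.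
  by rewrite /added leqnn eqxx -ltnS ltn_ord.
- by move=> a b c; apply: leq_trans.
- move=> u v h x y x' y' Eu Ev /added0 [Exy _] /added0 [Exy' _] E; subst u v x x' y'.
  by rewrite F1_id; apply: inSub_id.
- move=> u v h x y x' y' Eu Ev /added0 [Exy _] /added0 [Exy' _] E; subst u v x x' y'.
  by rewrite F1_id; apply: inSub_id.
- by move=> a /=; rewrite inord_val.
- by exists (fun a b h => h); rewrite /restrict /=; case: s => * /=; apply: psfun_eq_intro.
Qed.

Section AddPoint.
Variable st : Stage.
Variables k l : nat.
Hypothesis inv : Inv st (added k l.+1).
Hypothesis lt_lk : l < k.
Hypothesis le_kn : k <= n.

Local Notation m := (st_at st k.-1 l).
Local Notation M := (st_at st k l.+1).

Lemma added_m : added k l.+1 k.-1 l.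
Proof. by rewrite /added; lia. Qed.

Lemma added_M : added k l.+1 k l.+1.
Proof. by rewrite /added; lia. Qed.

Lemma le_mM : st_le st m M.
Proof. by rewrite (inv_le inv added_m added_M); lia. Qed.

Lemma no_back b : st_le st M b -> st_le st b m -> False.
Proof.
case: (inv_onto inv b) => x [y [Pxy <-]].
rewrite (inv_le inv added_M Pxy) (inv_le inv Pxy added_m); move: Pxy; rewrite /added; lia.
Qed.

Lemma added_old x y :
  added k l x y -> ((x == k) && (y == l)) = false -> added k l.+1 x y.
Proof. by rewrite /added; lia. Qed.

Lemma added_new x y :
  added k l.+1 x y -> added k l x y /\ ((x == k) && (y == l)) = false.
Proof. by rewrite /added; lia. Qed.

Variable Z : Ob C.
Variable i : Hom C (F0 (st_F st) m) Z.
Variable p : Hom C Z (F0 (st_F st) M).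
Variable phi : Cell C (comp1 p i) (F1 (st_F st) le_mM).
Hypothesis iA : inSub A i.
Hypothesis pB : inSub B p.

Definition add_point : Stage :=
  @mkStage (option (st_T st)) (le_ext (st_le st) m M)
    (fun x y => if (x == k) && (y == l) then None else Some (st_at st x y))
    (fun a => Some (st_diag st a))
    (extend (inv_trans inv) no_back phi).

Lemma add_point_le x y x' y' : added k l x y -> added k l x' y' ->
  st_le add_point (st_at add_point x y) (st_at add_point x' y') = (x <= x') && (y <= y').
Proof.
move=> Pxy Px'y' /=.
case E1: ((x == k) && (y == l)); case E2: ((x' == k) && (y' == l)) => /=.
- by move: E1 E2; lia.
- have P2 := added_old Px'y' E2; rewrite (inv_le inv added_M P2).
  by move: E1 E2 P2; rewrite /added; lia.
- have P1 := added_old Pxy E1; rewrite (inv_le inv P1 added_m).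
  by move: E1 E2 P1; rewrite /added; lia.
- exact: (inv_le inv (added_old Pxy E1) (added_old Px'y' E2)).
Qed.

(* Horizontal morphisms into the new point are F(x <= m) followed by i. *)
Lemma add_point_A u v (h : st_le add_point u v) x y x' y' :
  st_at add_point x y = u -> st_at add_point x' y' = v ->
  added k l x y -> added k l x' y' -> y = y' -> inSub A (F1 (st_F add_point) h).
Proof.
case: u v h => [a|] [b|] h Eu Ev P1 P2 E.
- have [E1 Ea] := if_some Eu; have [E2 Eb] := if_some Ev.
  exact: (inv_A inv h Ea Eb (added_old P1 E1) (added_old P2 E2) E).
- have [E1 Ea] := if_some Eu; have E2 := if_none Ev; apply: inSub_comp => //.
  by apply: (inv_A inv h Ea erefl (added_old P1 E1) added_m); move: E2 E; lia.
- have E1 := if_none Eu; have [E2 Eb] := if_some Ev.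
  exfalso; move: h => /=; rewrite -Eb (inv_le inv added_M (added_old P2 E2)).
  by move: E1 E; lia.
- exact: inSub_id.
Qed.

(* Vertical morphisms out of the new point are p followed by F(M <= y). *)
Lemma add_point_B u v (h : st_le add_point u v) x y x' y' :
  st_at add_point x y = u -> st_at add_point x' y' = v ->
  added k l x y -> added k l x' y' -> x = x' -> inSub B (F1 (st_F add_point) h).
Proof.
case: u v h => [a|] [b|] h Eu Ev P1 P2 E.
- have [E1 Ea] := if_some Eu; have [E2 Eb] := if_some Ev.
  exact: (inv_B inv h Ea Eb (added_old P1 E1) (added_old P2 E2) E).
- have [E1 Ea] := if_some Eu; have E2 := if_none Ev.
  exfalso; move: h => /=; rewrite -Ea (inv_le inv (added_old P1 E1) added_m).
  by move: E2 E; lia.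
- have E1 := if_none Eu; have [E2 Eb] := if_some Ev; apply: inSub_comp => //.
  by apply: (inv_B inv h erefl Eb added_M (added_old P2 E2)); move: E1 E; lia.
- exact: inSub_id.
Qed.

Lemma add_point_inv : Inv add_point (added k l).
Proof.
split.
- exact: add_point_le.
- case=> [u|]; last by exists k, l; split; [rewrite /added; lia | rewrite /= !eqxx].
  case: (inv_onto inv u) => x [y [Pxy Eu]]; case: (added_new Pxy) => P1 E1.
  by exists x, y; rewrite /= E1 Eu.
- move=> a b c /=; exact: (le_ext_trans (inv_trans inv) le_mM).
- exact: add_point_A.
- exact: add_point_B.
- move=> a /=; case E: ((a == k :> nat) && (a == l :> nat)); first by move: E; lia.
  by rewrite (inv_diag inv).
- case: (inv_sigma inv) => mono Emono; exists mono; rewrite -Emono /restrict /=.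
  exact: psfun_eq_intro.
Qed.

End AddPoint.

Hypothesis Hfact : forall (x y : Ob C) (f : Hom C x y),
  exists (z : Ob C) (i : Hom C x z) (p : Hom C z y),
    inSub A i /\ inSub B p /\ inhabited (Cell C (comp1 p i) f).

Lemma add_point_exists st k l : Inv st (added k l.+1) -> l < k -> k <= n ->
  exists st', Inv st' (added k l).
Proof.
move=> inv lt_lk le_kn.
have [z [i [p [iA [pB [phi]]]]]] := Hfact (F1 (st_F st) (le_mM inv lt_lk le_kn)).
by exists (add_point phi); apply: add_point_inv.
Qed.

Lemma fill_row k : 0 < k -> k <= n -> forall j, j <= k ->
  (exists st, Inv st (added k j)) -> exists st, Inv st (added k 0).
Proof.
move=> k_gt0 le_kn; elim=> [//|j IH] le_jk [st inv]; apply: IH; first by lia.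
exact: (add_point_exists inv).
Qed.

Lemma fill_rows K : K <= n -> exists st, Inv st (added K 0).
Proof.
elim: K => [_|K IH le_Kn]; first by exists stage0; exact: stage0_inv.
apply: fill_row (leqnn _) _ => //.
have [st inv] := IH (ltnW le_Kn); exists st.
by apply: Inv_ext inv => x y; rewrite /added; lia.
Qed.

Lemma comp_of_full_stage st : Inv st (added n 0) -> CompNonempty A B s.
Proof.
move=> inv.
have PD : forall q : Delta n, added n 0 (sval q).1 (sval q).2.
  by case=> [[a b] /= hab]; rewrite /added; have := ltn_ord a; lia.
pose d (q : Delta n) := st_at st (sval q).1 (sval q).2.
have mono : forall q q', leDelta q q' -> st_le st (d q) (d q').
  by move=> q q' h; rewrite /d (inv_le inv (PD q) (PD q')).
exists (@restrict _ _ (@leDelta n) (st_le st) C d mono (st_F st)); split; [|split].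
- case: (inv_sigma inv) => mono0 <-.
  transitivity (@restrict _ _ (@leOrd n) _ C (fun a => d (diag a))
                  (fun a b h => mono _ _ (diag_mono h)) (st_F st)).
    by rewrite /restrict /=; apply: psfun_eq_intro.
  by apply: restrict_ext => a; rewrite /d /=; apply: (inv_diag inv a).
- move=> q q' h E.
  exact: (inv_A inv (mono q q' h) erefl erefl (PD q) (PD q') (congr1 val E)).
- move=> q q' h E.
  exact: (inv_B inv (mono q q' h) erefl erefl (PD q) (PD q') (congr1 val E)).
Qed.

End Compactification.

Theorem mainTheorem6 (C : TwoCat) (HC : is21 C) (A B : SubCat C)
  (Hfact : forall (x y : Ob C) (f : Hom C x y),
      exists (z : Ob C) (i : Hom C x z) (p : Hom C z y),
        inSub A i /\ inSub B p /\ inhabited (Cell C (comp1 p i) f)) :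
  forall (n : nat) (s : simplex C n), CompNonempty A B s.
Proof.
move=> n s; have [st inv] := fill_rows s Hfact (leqnn n).
exact: comp_of_full_stage inv.
Qed.
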